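(* Let $p$ be a prime, $\Phi:\mathbb{N}\to\mathbb{N}$ strictly increasing, and $f:\mathbb{Z}_p\to\mathbb{Z}_p$ continuous. Then $f\in\mathcal{F}(\Phi)$ if and only if $v_p(B(\Phi,f;m))\ge \tau(\Phi;m)$ for every nonnegative integer $m$.
   Context: $\mathbb{N}=\{0,1,2,\dots\}$. $v_p$, $|\cdot|_p$ are the $p$-adic valuation and absolute value ($v_p(p)=1$, $|p|_p=p^{-1}$). For a nonnegative integer $m$, $m_i$ denote its base-$p$ digits. Set $\Phi(-1):=-1$. $\tau(\Phi;m):=\min\{h\in\mathbb{N}: m<p^{1+\Phi(h)}\}$. For $m\ge p^{1+\Phi(0)}$, $M(m):=\sum_{i=\Phi(\tau(\Phi;m)-1)+1}^{\Phi(\tau(\Phi;m))} m_ip^i$. Define $B(\Phi,f;m):=f(m)$ if $m<p^{1+\Phi(0)}$ and $B(\Phi,f;m):=f(m)-f(m-M(m))$ otherwise (these are the unique coefficients with $f(x)=\sum_m B(\Phi,f;m)\chi(\Phi,m;x)$, where $\chi(\Phi,m;x)=1$ if $|x-m|_p\le p^{-1-\Phi(\tau(\Phi;m))}$ and $0$ otherwise). $\mathcal{F}(\Phi)$ is the class of continuous $f:\mathbb{Z}_p\to\mathbb{Z}_p$ such that for every positive integer $n$ and all $x,y\in\mathbb{Z}_p$: if $|x-y|_p\le p^{-1-\Phi(n-1)}$ then $|f(x)-f(y)|_p\le p^{-n}$. *)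

From mathcomp Require Import all_boot.
Set Implicit Arguments. Unset Strict Implicit. Unset Printing Implicit Defensive.

(* An element x of Z_p is given by its residues x mod p^n (n : nat),
   a coherent sequence: res (n+1) mod p^n = res n.  (This is the inverse
   limit Z_p = lim Z/p^n Z.) *)
Record Zp (p : nat) := MkZp {
  res : nat -> nat;
  res_compat : forall n, res n.+1 %% p ^ n = res n }.
Arguments res {p}.

Lemma dvdn_expS (p n : nat) : p ^ n %| p ^ n.+1.
Proof. by rewrite expnS dvdn_mull. Qed.

Definition Zp_of_nat_res (p m : nat) (n : nat) := m %% p ^ n.
Lemma Zp_of_nat_compat p m n :
  Zp_of_nat_res p m n.+1 %% p ^ n = Zp_of_nat_res p m n.
Proof. by rewrite /Zp_of_nat_res (modn_dvdm _ (dvdn_expS p n)). Qed.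
Definition Zp_of_nat (p m : nat) : Zp p := MkZp (@Zp_of_nat_compat p m).

Definition Zp_sub_res (p : nat) (x y : Zp p) (n : nat) :=
  if 0 < p then (res x n + (p ^ n - res y n)) %% p ^ n else 0.

Lemma res_lt p (x : Zp p) n : 0 < p -> res x n < p ^ n.
Proof. by move=> p0; rewrite -res_compat ltn_pmod // expn_gt0 p0. Qed.

Lemma Zp_sub_compat p (x y : Zp p) n :
  Zp_sub_res x y n.+1 %% p ^ n = Zp_sub_res x y n.
Proof.
rewrite /Zp_sub_res; case: ifP => p0; last by rewrite mod0n.
have dQP := dvdn_expS p n.
set P := p ^ n.+1 in dQP *; set Q := p ^ n in dQP *.
have Q0 : 0 < Q by rewrite expn_gt0 p0.
rewrite (modn_dvdm _ dQP).
rewrite -(res_compat x n) -(res_compat y n) -/Q.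
have lb : res y n.+1 <= P by apply: ltnW; apply: res_lt.
have lbq : res y n.+1 %% Q <= Q by apply: ltnW; rewrite ltn_pmod.
apply/eqP; rewrite -(eqn_modDr (res y n.+1)) -addnA subnK //.
rewrite -(modnDmr (res x n.+1 %% Q + (Q - res y n.+1 %% Q))) -addnA subnK //.
rewrite modnDr modn_mod.
have PQ : P %% Q = 0 by apply/eqP; rewrite -/(dvdn Q P).
by rewrite -modnDmr PQ addn0.
Qed.

Definition Zp_sub (p : nat) (x y : Zp p) : Zp p := MkZp (@Zp_sub_compat p x y).

(* v_p(x) >= k  <->  x in p^k Z_p  <->  residue of x mod p^k is 0
   (v_p(0) = +infinity, so 0 satisfies this for every k). *)
Definition vp_ge (p : nat) (x : Zp p) (k : nat) : Prop := res x k = 0.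

Definition padic_close (p : nat) (x y : Zp p) (k : nat) : Prop :=
  vp_ge (Zp_sub x y) k.

Definition Zp_continuous (p : nat) (f : Zp p -> Zp p) : Prop :=
  forall (x : Zp p) (n : nat), exists k : nat,
    forall y : Zp p, padic_close x y k -> padic_close (f x) (f y) n.

Definition digit (p m i : nat) : nat := (m %/ p ^ i) %% p.

(* 1 + Phi(h - 1), with the convention Phi(-1) = -1 *)
Definition onePhiPred (Phi : nat -> nat) (h : nat) : nat :=
  if h is h'.+1 then (Phi h').+1 else 0.

(* tau(Phi;m) = min { h in N : m < p^(1 + Phi h) }.
   Computed by a search over h = 0..m; when Phi is strictly increasing
   and p >= 2 the minimum exists and is <= m, so this is the true minimum. *)
Definition tau (p : nat) (Phi : nat -> nat) (m : nat) : nat :=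
  find (fun h => m < p ^ (Phi h).+1) (iota 0 m.+1).

Definition Mpart (p : nat) (Phi : nat -> nat) (m : nat) : nat :=
  \sum_(onePhiPred Phi (tau p Phi m) <= i < (Phi (tau p Phi m)).+1)
     digit p m i * p ^ i.

Definition Bcoef (p : nat) (Phi : nat -> nat) (f : Zp p -> Zp p) (m : nat)
  : Zp p :=
  if m < p ^ (Phi 0).+1 then f (Zp_of_nat p m)
  else Zp_sub (f (Zp_of_nat p m)) (f (Zp_of_nat p (m - Mpart p Phi m))).

Definition inF (p : nat) (Phi : nat -> nat) (f : Zp p -> Zp p) : Prop :=
  Zp_continuous f /\
  forall n : nat, 0 < n -> forall x y : Zp p,
    padic_close x y (Phi n.-1).+1 -> padic_close (f x) (f y) n.

(* For [tau m = t + 1] the integer [m - M(m)] is [m mod p^(1+Phi t)],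
   so [v_p(B(m)) >= tau m] says exactly that [f m] and [f (m mod p^(1+Phi t))]
   agree modulo [p^(t+1)].  This is the defining condition of [F(Phi)] on pairs
   of integers; conversely, iterating it (strong induction on [m]) gives
   [f m = f (m mod p^(1+Phi(n-1))) mod p^n], which extends from [N] to [Z_p]
   by continuity of [f] and density of [N]. *)
From mathcomp Require Import all_boot zify.
Set Implicit Arguments. Unset Strict Implicit.

Lemma modn_expS p m b : m %% p ^ b.+1 = m %% p ^ b + digit p m b * p ^ b.
Proof.
rewrite /digit modn_divl -expnS addnC {1}(divn_eq (m %% p ^ b.+1) (p ^ b)).
by rewrite modn_dvdm // dvdn_exp2l.
Qed.

Lemma leq_modn_exp p m : {homo (fun b => m %% p ^ b) : a b / a <= b}.
Proof. by apply: homo_leq leqnn leq_trans _ => b; rewrite modn_expS leq_addr. Qed.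

Lemma sum_digits_modn p m a b :
  \sum_(a <= i < b) digit p m i * p ^ i = m %% p ^ b - m %% p ^ a.
Proof.
rewrite -(telescope_sumn _ _ (@leq_modn_exp p m)).
by apply: eq_bigr => i _; rewrite modn_expS addKn.
Qed.

Section Residues.
Variable p : nat.
Hypothesis p_gt1 : 1 < p.

Let p_gt0 : 0 < p. Proof. exact: ltnW. Qed.

Lemma padic_closeP (x y : Zp p) k : padic_close x y k <-> res x k = res y k.
Proof.
rewrite /padic_close /vp_ge /= /Zp_sub_res p_gt0.
have ltx := res_lt x k p_gt0; have lty := res_lt y k p_gt0.
split=> [close_xy | ->]; last by rewrite subnKC ?modnn // ltnW.
rewrite -(modn_small ltx) -(modn_small lty); apply/eqP.
by rewrite -(eqn_modDr (p ^ k - res y k)) close_xy subnKC ?modnn // ltnW.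
Qed.

Lemma res_modn_exp (x : Zp p) n k : n <= k -> res x n = res x k %% p ^ n.
Proof.
move=> /subnKC <-; elim: (k - n) => [|d IH]; first by rewrite addn0 modn_small ?res_lt.
by rewrite IH addnS -res_compat modn_dvdm // dvdn_exp2l // leq_addr.
Qed.

Lemma vp_ge0 (x : Zp p) : vp_ge x 0.
Proof. by have := res_lt x 0 p_gt0; rewrite /vp_ge expn0; case: (res x 0). Qed.

Lemma close_Zp_of_nat_res (x : Zp p) n k :
  n <= k -> padic_close x (Zp_of_nat p (res x k)) n.
Proof. by move=> le_nk; apply/padic_closeP; rewrite /= /Zp_of_nat_res -res_modn_exp. Qed.

(* Density of [N] in [Z_p]: both [x] and [y] are approximated by their
   truncations [res x K], [res y K], which are still [L]-close. *)
Lemma continuous_close_nat (f : Zp p -> Zp p) L n :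
  Zp_continuous f ->
  (forall m, padic_close (f (Zp_of_nat p m)) (f (Zp_of_nat p (m %% p ^ L))) n) ->
  forall x y, padic_close x y L -> padic_close (f x) (f y) n.
Proof.
move=> f_cont f_nat x y /padic_closeP close_xy; apply/padic_closeP.
have [Kx fx_cont] := f_cont x n; have [Ky fy_cont] := f_cont y n.
pose K := maxn (maxn Kx Ky) L.
have /fx_cont/padic_closeP -> : padic_close x (Zp_of_nat p (res x K)) Kx.
  by apply: close_Zp_of_nat_res; lia.
have /fy_cont/padic_closeP -> : padic_close y (Zp_of_nat p (res y K)) Ky.
  by apply: close_Zp_of_nat_res; lia.
move: (f_nat (res x K)) (f_nat (res y K)) => /padic_closeP -> /padic_closeP ->.
by rewrite -!res_modn_exp ?close_xy //; lia.
Qed.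

Variable Phi : nat -> nat.
Hypothesis Phi_inc : forall n, Phi n < Phi n.+1.

Lemma Phi_mono : {homo Phi : i j / i <= j}.
Proof. exact: homo_leq leqnn leq_trans (fun i => ltnW (Phi_inc i)). Qed.

Lemma Phi_ge i : i <= Phi i.
Proof. by elim: i => [|i IH] //; apply: leq_ltn_trans IH (Phi_inc i). Qed.

Lemma tau_bound m : m < p ^ (Phi (tau p Phi m)).+1.
Proof.
have tau_exists : has (fun h => m < p ^ (Phi h).+1) (iota 0 m.+1).
  apply/hasP; exists m; first by rewrite mem_iota ltnSn.
  apply: leq_trans (ltn_expl m p_gt1) (leq_pexp2l p_gt0 _).
  exact: leq_trans (Phi_ge m) (leqnSn _).
have lt_tau := tau_exists; rewrite has_find size_iota in lt_tau.
by have := nth_find 0 tau_exists; rewrite nth_iota.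
Qed.

Lemma tau_min m h : h < tau p Phi m -> p ^ (Phi h).+1 <= m.
Proof.
move=> lt_h_tau; have := find_size (fun h => m < p ^ (Phi h).+1) (iota 0 m.+1).
rewrite size_iota => le_tau.
have := before_find 0 lt_h_tau; rewrite nth_iota; last exact: leq_trans lt_h_tau le_tau.
by rewrite add0n => /negbT; rewrite -leqNgt.
Qed.

Lemma tau_gt m h : p ^ (Phi h).+1 <= m -> h < tau p Phi m.
Proof.
move=> le_m; rewrite ltnNge; apply/negP => /Phi_mono le_Phi.
have le_exp : p ^ (Phi (tau p Phi m)).+1 <= p ^ (Phi h).+1 by rewrite leq_pexp2l.
by have := leq_trans (tau_bound m) (leq_trans le_exp le_m); rewrite ltnn.
Qed.

Lemma Mpart_tauS m t : tau p Phi m = t.+1 -> m - Mpart p Phi m = m %% p ^ (Phi t).+1.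
Proof.
move=> tau_m; rewrite /Mpart tau_m sum_digits_modn /= modn_small ?subKn ?leq_mod //.
by rewrite -tau_m tau_bound.
Qed.

Lemma vp_ge_Bcoef_tauS (f : Zp p -> Zp p) m t : tau p Phi m = t.+1 ->
  vp_ge (Bcoef Phi f m) (tau p Phi m) <->
  padic_close (f (Zp_of_nat p m)) (f (Zp_of_nat p (m %% p ^ (Phi t).+1))) t.+1.
Proof.
move=> tau_m; have m_big : p ^ (Phi 0).+1 <= m by apply: tau_min; rewrite tau_m.
by rewrite /Bcoef ltnNge m_big /= tau_m (Mpart_tauS tau_m).
Qed.

Lemma inF_vp_ge_Bcoef (f : Zp p -> Zp p) :
  inF Phi f -> forall m, vp_ge (Bcoef Phi f m) (tau p Phi m).
Proof.
move=> [_ f_inF] m; case tau_m: (tau p Phi m) => [|t]; first exact: vp_ge0.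
rewrite -tau_m (vp_ge_Bcoef_tauS _ tau_m); apply: (f_inF t.+1) => //.
by apply/padic_closeP; rewrite /= /Zp_of_nat_res modn_mod.
Qed.

Section FromCoefficients.
Variable f : Zp p -> Zp p.
Hypothesis vp_Bcoef : forall m, vp_ge (Bcoef Phi f m) (tau p Phi m).

Lemma res_f_modn n m :
  res (f (Zp_of_nat p m)) n = res (f (Zp_of_nat p (m %% p ^ (Phi n.-1).+1))) n.
Proof.
set L := (Phi n.-1).+1; elim/ltn_ind: m => m IH.
have [lt_m_L | le_L_m] := ltnP m (p ^ L); first by rewrite modn_small.
case tau_m: (tau p Phi m) (tau_gt le_L_m) => [|t] //; rewrite ltnS => le_predn_t.
have /padic_closeP step := (vp_ge_Bcoef_tauS f tau_m).1 (vp_Bcoef m).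
have le_n : n <= t.+1 by lia.
rewrite (res_modn_exp _ le_n) step -(res_modn_exp _ le_n).
have lt_mod : m %% p ^ (Phi t).+1 < m.
  apply: leq_trans (tau_min (_ : t < tau p Phi m)); last by rewrite tau_m.
  by rewrite ltn_pmod // expn_gt0 p_gt0.
by rewrite IH ?modn_dvdm // dvdn_exp2l // ltnS Phi_mono.
Qed.

Lemma vp_ge_Bcoef_inF : Zp_continuous f -> inF Phi f.
Proof.
move=> f_cont; split=> // n _; apply: continuous_close_nat f_cont _ => m.
by apply/padic_closeP; apply: res_f_modn.
Qed.

End FromCoefficients.
End Residues.

Theorem proposition2 (p : nat) (Phi : nat -> nat) (f : Zp p -> Zp p) :
  prime p ->
  (forall n : nat, Phi n < Phi n.+1) ->
  Zp_continuous f ->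
  (inF Phi f <-> forall m : nat, vp_ge (Bcoef Phi f m) (tau p Phi m)).
Proof.
move=> /prime_gt1 p_gt1 Phi_inc f_cont; split.
  exact: inF_vp_ge_Bcoef.
by move=> vp_Bcoef; apply: vp_ge_Bcoef_inF.
Qed.
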